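(* Let $G_1,\dots,G_k$ be graphs that are pairwise QASST equivalent and pairwise not locally equivalent, and suppose every graph QASST equivalent to $G_1$ is locally equivalent to one of $G_1,\dots,G_k$. Then $|\mathcal{O}(G_1)|+\cdots+|\mathcal{O}(G_k)|=\Phi(G_1)$.
   Context: Graphs are finite, simple, connected, on a fixed labelled vertex set. The local complement $c_v(G)$ replaces the induced subgraph on the neighbourhood of $v$ by its complement; graphs are locally equivalent if related by a finite sequence of local complements, and $\mathcal{O}(G)$ is the set of graphs locally equivalent to $G$ (labelled graphs). A split is a bipartition $V=A\sqcup B$ with the $A$–$B$ edges forming a complete bipartite graph between the vertices having neighbours across; it is strong if no other split crosses it. Cutting along all nontrivial strong splits (each side plus a new paired marker vertex adjacent to the vertices having neighbours across) yields a tree whose nodes are labelled by quotient graphs. Two graphs are QASST equivalent if they have the same strong splits and corresponding quotient graphs are locally equivalent. $\Phi(G)$ is the number of graphs QASST equivalent to $G$. *)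

(* Graphs on a fixed labelled finite vertex set T are
   represented by their (ordered-pair) edge sets E : {set T * T}. *)
From mathcomp Require Import all_boot.
Set Implicit Arguments. Unset Strict Implicit. Unset Printing Implicit Defensive.

Section Graphs.
Variable V : finType.

Definition is_graph (E : {set V * V}) : bool :=
  [forall x, forall y, ((x, y) \in E) == ((y, x) \in E)] &&
  [forall x, (x, x) \notin E] &&
  [forall x, forall y, connect [rel a b | (a, b) \in E] x y].

Definition nbhd (E : {set V * V}) (v : V) : {set V} := [set w | (v, w) \in E].

Definition local_compl (v : V) (E : {set V * V}) : {set V * V} :=
  [set p | if [&& p.1 \in nbhd E v, p.2 \in nbhd E v & p.1 != p.2]
           then (p \notin E) else (p \in E)].

Definition lc_step : rel {set V * V} :=
  fun E F => [exists v, F == local_compl v E].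

Definition loc_equiv (E F : {set V * V}) : bool := connect lc_step E F.

End Graphs.

Section Splits.
Variable T : finType.

(* (A, ~:A) is a split: a bipartition (both sides nonempty) such that the
   A--B edges form a complete bipartite graph between the vertices having
   neighbours across. *)
Definition is_split (E : {set T * T}) (A : {set T}) : bool :=
  [&& A != set0, ~: A != set0 &
   [forall a, forall a', forall b, forall b',
      [&& a \in A, a' \in A, b \in ~: A, b' \in ~: A,
          (a, b) \in E & (a', b') \in E] ==> ((a, b') \in E)]].

Definition nontrivial_split (E : {set T * T}) (A : {set T}) : bool :=
  [&& is_split E A, 1 < #|A| & 1 < #|~: A|].

Definition crossing (A C : {set T}) : bool :=
  [&& A :&: C != set0, A :&: ~: C != set0,
      ~: A :&: C != set0 & ~: A :&: ~: C != set0].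

Definition strong_split (E : {set T * T}) (A : {set T}) : bool :=
  is_split E A &&
  [forall C, (is_split E C && (C != A) && (C != ~: A)) ==> ~~ crossing A C].

(* the sides of all nontrivial strong splits (closed under complement) *)
Definition strong_splits (E : {set T * T}) : {set {set T}} :=
  [set A | nontrivial_split E A && strong_split E A].

(* The nodes of the split-decomposition tree determined by a (laminar)
   family S of split sides: a node is identified with the partition of V
   into the branches at it (each branch is a single vertex attached to the
   node, or the far side of a tree edge = a side of a split in S). *)
Definition is_node (S : {set {set T}}) (P : {set {set T}}) : bool :=
  [&& partition P [set: T], 2 < #|P|,
      [forall X in P, (#|X| == 1) || (X \in S)] &
      [forall A in S, [exists X in P, (A \subset X) || (~: A \subset X)]]].

(* quotient graph at the node P: vertices are the blocks of P (the marker
   vertices / attached vertices), two blocks adjacent iff G has an edge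
   between them. *)
Definition quotient_graph (P : {set {set T}}) (E : {set T * T})
  : {set {set T} * {set T}} :=
  [set p | [&& p.1 \in P, p.2 \in P, p.1 != p.2 &
            [exists x in p.1, exists y in p.2, (x, y) \in E]]].

Definition qasst (E F : {set T * T}) : bool :=
  (strong_splits E == strong_splits F) &&
  [forall P, is_node (strong_splits E) P ==>
     loc_equiv (quotient_graph P E) (quotient_graph P F)].

Definition orbitO (E : {set T * T}) : {set {set T * T}} :=
  [set F | is_graph F && loc_equiv E F].

Definition Phi (E : {set T * T}) : nat :=
  #|[set F | is_graph F && qasst E F]|.

End Splits.

From mathcomp Require Import all_boot.
Set Implicit Arguments. Unset Strict Implicit. Unset Printing Implicit Defensive.

(* Local complementation at [v] preserves every split: the edges across a cut
   form a product [S x R], and toggling [N(v)] keeps that shape.  Hence it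
   preserves the strong splits, and on the quotient graph at any node of the
   split decomposition it acts as local complementation at the block
   containing [v] (or not at all, when [v] has no neighbour outside that
   block).  So locally equivalent graphs are QASST equivalent, and the QASST
   class of [G_1] is the disjoint union of the orbits [O(G_i)]. *)

Lemma in_local_compl (V : finType) (v : V) (E : {set V * V}) x y :
  ((x, y) \in local_compl v E) =
  (if [&& (v, x) \in E, (v, y) \in E & x != y] then (x, y) \notin E
   else (x, y) \in E).
Proof. by rewrite /local_compl /nbhd !inE. Qed.

Section LocalEquivalence.
Variable T : finType.
Implicit Types (E F : {set T * T}) (A S R W X Y Z : {set T}) (v : T).

Definition edge_symmetric E := forall x y, ((x, y) \in E) = ((y, x) \in E).
Definition loopless E := forall x, (x, x) \notin E.

Lemma graph_edge_symmetric E : is_graph E -> edge_symmetric E.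
Proof. by case/andP=> /andP[/forallP sE _] _ x y; apply/eqP; move/forallP: (sE x). Qed.

Lemma graph_loopless E : is_graph E -> loopless E.
Proof. by case/andP=> /andP[_ /forallP]. Qed.

Lemma local_compl_sym v E : edge_symmetric E -> edge_symmetric (local_compl v E).
Proof.
move=> sE x y; rewrite !in_local_compl (sE x y) [y == x]eq_sym.
by case: ((v, x) \in E); case: ((v, y) \in E).
Qed.

Lemma local_compl_loopless v E : loopless E -> loopless (local_compl v E).
Proof. by move=> iE x; rewrite in_local_compl eqxx !andbF; apply: iE. Qed.

Lemma local_compl_nbhd v E w :
  loopless E -> ((v, w) \in local_compl v E) = ((v, w) \in E).
Proof. by move=> iE; rewrite in_local_compl (negbTE (iE v)). Qed.

Lemma local_complK v E : loopless E -> local_compl v (local_compl v E) = E.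
Proof.
move=> iE; apply/setP=> -[x y]; rewrite !in_local_compl (negbTE (iE v)) /=.
by case: [&& _, _ & _]; rewrite ?negbK.
Qed.

Definition four_point_split E A :=
  forall a a' b b', a \in A -> a' \in A -> b \notin A -> b' \notin A ->
  (a, b) \in E -> (a', b') \in E -> (a, b') \in E.

Definition product_cut E A :=
  exists S R, forall a b, a \in A -> b \notin A ->
  ((a, b) \in E) = (a \in S) && (b \in R).

Lemma splitP E A :
  reflect [/\ A != set0, ~: A != set0 & four_point_split E A] (is_split E A).
Proof.
apply: (iffP and3P) => -[nA nCA sA]; split=> //.
  move=> a a' b b' aA a'A bA b'A ab a'b'.
  move/forallP/(_ a)/forallP/(_ a')/forallP/(_ b)/forallP/(_ b')/implyP: sA.
  by apply; rewrite !inE aA a'A bA b'A ab a'b'.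
apply/forallP=> a; apply/forallP=> a'; apply/forallP=> b; apply/forallP=> b'.
apply/implyP; rewrite !inE => /and5P[aA a'A bA b'A /andP[ab a'b']].
exact: (sA a a' b b').
Qed.

Lemma four_point_product_cut E A : four_point_split E A <-> product_cut E A.
Proof.
split=> [sA | [S [R cutA]] a a' b b' aA a'A bA b'A].
  exists [set a | [exists b, (b \notin A) && ((a, b) \in E)]].
  exists [set b | [exists a, (a \in A) && ((a, b) \in E)]].
  move=> a b aA bA; rewrite !inE; apply/idP/andP=> [ab | ].
    by split; apply/existsP; [exists b | exists a]; rewrite ?aA ?bA ab.
  case=> /existsP[b1 /andP[b1A ab1]] /existsP[a1 /andP[a1A a1b]].
  exact: (sA a a1 b1 b).
by rewrite !cutA // => /andP[-> _] /andP[_ ->].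
Qed.

Lemma product_cutC E A :
  edge_symmetric E -> product_cut E A -> product_cut E (~: A).
Proof.
move=> sE [S [R cutA]]; exists R, S => a b; rewrite !inE negbK => aA bA.
by rewrite sE cutA // andbC.
Qed.

(* When [v] has a neighbour across the cut, the new inner side is [S] xor [N(v)]. *)
Lemma product_cut_lc_in v E A :
  v \in A -> product_cut E A -> product_cut (local_compl v E) A.
Proof.
move=> vA [S [R cutA]].
have neq a b : a \in A -> b \notin A -> a != b.
  by move=> aA; apply: contraNneq => <-.
have [/existsP[b0 /andP[b0A vb0]] | /existsPn isolated] :=
  boolP [exists b, (b \notin A) && ((v, b) \in E)].
  have vS : v \in S by move: vb0; rewrite cutA // => /andP[].
  exists [set a | (a \in S) != ((v, a) \in E)], R => a b aA bA.
  rewrite in_local_compl inE (neq a b aA bA) (cutA a b aA bA) (cutA v b vA bA).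
  by rewrite vS andbT /=; case: (a \in S); case: ((v, a) \in E); case: (b \in R).
exists S, R => a b aA bA.
have /negbTE vb : (v, b) \notin E by move: (isolated b); rewrite bA.
by rewrite in_local_compl vb andbF cutA.
Qed.

Lemma product_cut_lc v E A :
  edge_symmetric E -> product_cut E A -> product_cut (local_compl v E) A.
Proof.
move=> sE cutA; have [vA | vA] := boolP (v \in A); first exact: product_cut_lc_in.
rewrite -[A]setCK; apply: product_cutC; first exact: local_compl_sym.
by apply: product_cut_lc_in; [rewrite inE | apply: product_cutC].
Qed.

Lemma four_point_split_lc v E A : edge_symmetric E -> loopless E ->
  four_point_split (local_compl v E) A <-> four_point_split E A.
Proof.
move=> sE iE; split=> /four_point_product_cut cutA; apply/four_point_product_cut.
  rewrite -(local_complK v iE); apply: product_cut_lc cutA.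
  exact: local_compl_sym.
exact: product_cut_lc.
Qed.

Lemma is_split_lc v E A : edge_symmetric E -> loopless E ->
  is_split (local_compl v E) A = is_split E A.
Proof.
move=> sE iE; have splitA := four_point_split_lc v A sE iE.
by apply/splitP/splitP=> -[nA nCA sA]; split=> //; apply/splitA.
Qed.

Lemma strong_splits_lc v E : edge_symmetric E -> loopless E ->
  strong_splits (local_compl v E) = strong_splits E.
Proof.
move=> sE iE; apply/setP=> A.
rewrite !inE /nontrivial_split /strong_split !is_split_lc //.
by do 2 congr (_ && _); apply: eq_forallb => C; rewrite is_split_lc.
Qed.

Definition linked E Y Z := [exists y in Y, exists z in Z, (y, z) \in E].

Lemma in_quotient_graph P E Y Z :
  ((Y, Z) \in quotient_graph P E) = [&& Y \in P, Z \in P, Y != Z & linked E Y Z].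
Proof. by rewrite inE. Qed.

Lemma linkedC E Y Z : edge_symmetric E -> linked E Y Z = linked E Z Y.
Proof.
move=> sE; apply/existsP/existsP=> -[a /andP[aA /existsP[b /andP[bB ab]]]];
  by exists b; rewrite bB; apply/existsP; exists a; rewrite aA -sE.
Qed.

Lemma eq_linked E F Y Z :
  {in Y & Z, forall y z, ((y, z) \in F) = ((y, z) \in E)} ->
  linked F Y Z = linked E Y Z.
Proof.
move=> eqFE; apply: eq_existsb => y; case yY: (y \in Y) => //=.
by apply: eq_existsb => z; case zZ: (z \in Z); rewrite //= eqFE.
Qed.

Lemma linked_lc_unchanged v E Y Z :
  {in Y & Z, forall y z, ~~ (((v, y) \in E) && ((v, z) \in E))} ->
  linked (local_compl v E) Y Z = linked E Y Z.
Proof.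
move=> notboth; apply: eq_linked => y z yY zZ.
by rewrite in_local_compl andbA (negbTE (notboth y z yY zZ)).
Qed.

Lemma four_point_split_nbhd E W v w w' z :
  edge_symmetric E -> four_point_split E W -> v \notin W -> w' \in W ->
  (v, w') \in E -> w \in W -> z \notin W -> (w, z) \in E -> (v, w) \in E.
Proof.
move=> sE splitW vW w'W vw' wW zW wz.
by rewrite sE; apply: (splitW w w' z v) => //; rewrite -sE.
Qed.

Lemma linked_split_nbhd E X W v b :
  four_point_split E X -> v \in X -> b \notin X -> (v, b) \in E ->
  [disjoint X & W] -> linked E X W = [exists w in W, (v, w) \in E].
Proof.
move=> splitX vX bX vb dXW; apply/existsP/existsP.
  case=> x /andP[xX /existsP[w /andP[wW xw]]]; exists w; rewrite wW /=.
  by apply: (splitX v x b w) => //; rewrite (disjointFl dXW wW).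
case=> w /andP[wW vw]; exists v; rewrite vX.
by apply/existsP; exists w; rewrite wW.
Qed.

(* The [Y]-[Z] edges form either the complete bipartite graph between
   [N(v) :&: Y] and [N(v) :&: Z] or nothing, and complementing at [v] swaps
   the two cases. *)
Lemma linked_lc_toggle E Y Z v y1 z1 :
  edge_symmetric E -> four_point_split E Y -> four_point_split E Z ->
  [disjoint Y & Z] -> v \notin Y -> v \notin Z ->
  y1 \in Y -> (v, y1) \in E -> z1 \in Z -> (v, z1) \in E ->
  linked (local_compl v E) Y Z = ~~ linked E Y Z.
Proof.
move=> sE splitY splitZ dYZ vY vZ y1Y vy1 z1Z vz1.
have Z'Y y : y \in Y -> y \notin Z by move=> yY; rewrite (disjointFr dYZ yY).
have Y'Z z : z \in Z -> z \notin Y by move=> zZ; rewrite (disjointFl dYZ zZ).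
have toggle y z : y \in Y -> z \in Z -> ((y, z) \in local_compl v E) =
    (if ((v, y) \in E) && ((v, z) \in E) then (y, z) \notin E else (y, z) \in E).
  move=> yY zZ; have yz : y != z by apply: contraTneq zZ => <-; apply: Z'Y.
  by rewrite in_local_compl yz andbT.
have edge_nbhd y z : y \in Y -> z \in Z -> (y, z) \in E ->
    ((v, y) \in E) && ((v, z) \in E).
  move=> yY zZ yz; apply/andP; split.
    exact: (four_point_split_nbhd sE splitY vY y1Y vy1 yY (Y'Z z zZ)).
  by apply: (four_point_split_nbhd sE splitZ vZ z1Z vz1 zZ (Z'Y y yY)); rewrite -sE.
have complete y z : linked E Y Z -> y \in Y -> z \in Z ->
    (v, y) \in E -> (v, z) \in E -> (y, z) \in E.
  case/existsP=> y0 /andP[y0Y /existsP[z0 /andP[z0Z y0z0]]] yY zZ vy vz.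
  have yz0 : (y, z0) \in E.
    by apply: (splitY y y0 v z0) => //; [apply: Y'Z | rewrite sE].
  by rewrite sE; apply: (splitZ z z0 v y) => //; [apply: Z'Y | rewrite sE | rewrite -sE].
apply/idP/idP.
  case/existsP=> y /andP[yY /existsP[z /andP[zZ]]]; rewrite toggle //.
  case: ifP => [/andP[vy vz] | notboth] yz.
    by apply: contra yz => linkedYZ; apply: complete.
  by rewrite (edge_nbhd y z yY zZ yz) in notboth.
move=> unlinked; apply/existsP; exists y1; rewrite y1Y; apply/existsP.
exists z1; rewrite z1Z toggle // vy1 vz1 /=.
by apply: contra unlinked => y1z1; apply/existsP; exists y1; rewrite y1Y;
  apply/existsP; exists z1; rewrite z1Z.
Qed.

Section QuotientLocalComplement.
Variables (E : {set T * T}) (P : {set {set T}}) (v : T).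
Hypotheses (sE : edge_symmetric E) (iE : loopless E).
Hypotheses (partP : partition P [set: T])
           (split_blocks : {in P, forall X, four_point_split E X}).

Let trivP : trivIset P. Proof. by case/and3P: partP. Qed.
Let coverP y : y \in cover P. Proof. by case/and3P: partP => /eqP ->. Qed.

Let X := pblock P v.
Let XP : X \in P. Proof. exact: pblock_mem (coverP v). Qed.
Let vX : v \in X. Proof. by rewrite mem_pblock coverP. Qed.

Let disjoint_blocks Y Z : Y \in P -> Z \in P -> Y != Z -> [disjoint Y & Z].
Proof. by move/trivIsetP: trivP; apply. Qed.

Let notin_block Y : Y \in P -> X != Y -> v \notin Y.
Proof. by move=> YP; apply: contra => vY; rewrite /X (def_pblock trivP YP vY). Qed.

Lemma quotient_lc_isolated : (forall b, (v, b) \in E -> b \in X) ->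
  quotient_graph P (local_compl v E) = quotient_graph P E.
Proof.
move=> nbX; apply/setP=> -[Y Z]; rewrite !in_quotient_graph.
case YP: (Y \in P) => //=; case ZP: (Z \in P) => //=; case: eqVneq => //= YZ.
apply: linked_lc_unchanged => y z yY zZ; apply/andP=> -[/nbX yX /nbX zX].
move: YZ; rewrite -(def_pblock trivP YP yY) -(def_pblock trivP ZP zZ).
by rewrite (def_pblock trivP XP yX) (def_pblock trivP XP zX) eqxx.
Qed.

Lemma quotient_lc_across b : b \notin X -> (v, b) \in E ->
  quotient_graph P (local_compl v E) = local_compl X (quotient_graph P E).
Proof.
move=> bX vb; set F := local_compl v E.
have nbhd W : W \in P -> X != W -> linked E X W = [exists w in W, (v, w) \in E].
  move=> WP XW; apply: linked_split_nbhd (split_blocks XP) vX bX vb _.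
  exact: disjoint_blocks.
have linkedX W : W \in P -> X != W -> linked F X W = linked E X W.
  move=> WP XW; rewrite nbhd // (linked_split_nbhd (v := v) (b := b)) //.
  - by apply: eq_existsb => w; rewrite local_compl_nbhd.
  - exact/(four_point_split_lc v X sE iE)/split_blocks.
  - by rewrite local_compl_nbhd.
  - exact: disjoint_blocks.
apply/setP=> -[Y Z]; rewrite in_local_compl !in_quotient_graph XP /=.
case YP: (Y \in P) => //=; case ZP: (Z \in P) => /=; last by rewrite andbF.
have [<- | YZ] /= := eqVneq Y Z; first by rewrite !andbF.
have [XY | XY] /= := eqVneq X Y.
  by rewrite -XY in YZ *; rewrite linkedX.
have [XZ | XZ] /= := eqVneq X Z.
  rewrite -XZ eq_sym in YZ *; rewrite andbF /= linkedC ?linkedX 1?linkedC //.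
  exact: local_compl_sym.
rewrite !nbhd // andbT.
have [/existsP[y1 /andP[y1Y vy1]] | nY] /= := boolP [exists y in Y, (v, y) \in E].
  have [/existsP[z1 /andP[z1Z vz1]] | nZ] /= := boolP [exists z in Z, (v, z) \in E].
    exact: (linked_lc_toggle sE (split_blocks YP) (split_blocks ZP)
      (disjoint_blocks YP ZP YZ) (notin_block YP XY) (notin_block ZP XZ) y1Y vy1 z1Z vz1).
  apply: linked_lc_unchanged => y z _ zZ; apply: contra nZ => /andP[_ vz].
  by apply/existsP; exists z; rewrite zZ.
apply: linked_lc_unchanged => y z yY _; apply: contra nY => /andP[vy _].
by apply/existsP; exists y; rewrite yY.
Qed.

Lemma quotient_graph_lc :
  loc_equiv (quotient_graph P E) (quotient_graph P (local_compl v E)).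
Proof.
have [/existsP[b /andP[bX vb]] | /existsPn isolated] :=
  boolP [exists b, (b \notin X) && ((v, b) \in E)].
  by rewrite (quotient_lc_across bX vb); apply: connect1; apply/existsP; exists X.
rewrite quotient_lc_isolated; first exact: connect0.
by move=> b vb; move: (isolated b); rewrite vb andbT negbK.
Qed.
End QuotientLocalComplement.

Lemma qasst_refl E : qasst E E.
Proof. by rewrite /qasst eqxx; apply/forallP=> P; apply/implyP=> _; apply: connect0. Qed.

Lemma qasst_trans E F H : qasst E F -> qasst F H -> qasst E H.
Proof.
case/andP=> /eqP sEF /forallP qEF /andP[/eqP sFH /forallP qFH].
rewrite /qasst sEF sFH eqxx; apply/forallP=> P; apply/implyP=> nodeP.
apply: connect_trans (implyP (qEF P) _) (implyP (qFH P) _); by rewrite ?sEF sFH.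
Qed.

Lemma qasst_local_compl v E : edge_symmetric E -> loopless E ->
  qasst E (local_compl v E).
Proof.
move=> sE iE; rewrite /qasst strong_splits_lc // eqxx.
apply/forallP=> P; apply/implyP=> /and4P[partP _ /forall_inP blocksP _].
apply: quotient_graph_lc => // X /blocksP /orP[/cards1P[x ->] | ].
  by move=> a a' b b'; rewrite !inE => /eqP-> /eqP->.
by rewrite inE => /andP[/and3P[/splitP[]]].
Qed.

Lemma loc_equiv_qasst E F : edge_symmetric E -> loopless E ->
  loc_equiv E F -> qasst E F /\ loc_equiv F E.
Proof.
move=> + + /connectP[p + ->]; elim: p E => [|F' p IHp] E sE iE /=.
  by split; [apply: qasst_refl | apply: connect0].
case/andP=> /existsP[v /eqP->] pathF.
have [qF eqF] := IHp _ (local_compl_sym v sE) (local_compl_loopless v iE) pathF.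
split; first exact: qasst_trans (qasst_local_compl v sE iE) qF.
apply: connect_trans eqF (connect1 _); apply/existsP; exists v.
by rewrite local_complK.
Qed.

Lemma graph_loc_equiv_qasst E F : is_graph E ->
  loc_equiv E F -> qasst E F /\ loc_equiv F E.
Proof.
move=> gE; apply: loc_equiv_qasst.
  exact: graph_edge_symmetric.
exact: graph_loopless.
Qed.

Lemma orbitO_qasst E F : is_graph E -> F \in orbitO E -> qasst E F.
Proof. by move=> gE; rewrite inE => /andP[_ /(graph_loc_equiv_qasst gE)[]]. Qed.

Lemma orbitO_disjoint E E' : is_graph E' -> ~~ loc_equiv E E' ->
  [disjoint orbitO E & orbitO E'].
Proof.
move=> gE' nEE'; rewrite disjoints_subset; apply/subsetP=> F.
rewrite !inE => /andP[_ EF]; apply: contra nEE' => /andP[_ E'F].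
exact: connect_trans EF (graph_loc_equiv_qasst gE' E'F).2.
Qed.

End LocalEquivalence.

Theorem corollary3 (T : finType) (k : nat) (G : 'I_k.+1 -> {set T * T}) :
  (forall i, is_graph (G i)) ->
  (forall i j, qasst (G i) (G j)) ->
  (forall i j, i != j -> ~~ loc_equiv (G i) (G j)) ->
  (forall H, is_graph H -> qasst (G ord0) H ->
     exists i, loc_equiv H (G i)) ->
  \sum_(i < k.+1) #|orbitO (G i)| = Phi (G ord0).
Proof.
move=> graphG qasstG distinctG coverG; rewrite /Phi.
have -> : [set F | is_graph F && qasst (G ord0) F] = \bigcup_i orbitO (G i).
  apply/setP=> F; rewrite inE; apply/andP/bigcupP=> [[gF qF] | [i _ Fi]].
    have [i Fi] := coverG F gF qF; exists i => //; rewrite inE gF.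
    by case: (graph_loc_equiv_qasst gF Fi).
  split; first by move: Fi; rewrite inE => /andP[].
  exact: qasst_trans (qasstG ord0 i) (orbitO_qasst (graphG i) Fi).
rewrite -sum1_card partition_disjoint_bigcup => [|i j ij].
  by apply: eq_bigr => i _; rewrite sum1_card.
exact: orbitO_disjoint (graphG j) (distinctG i j ij).
Qed.
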